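(* Let $m,n,d,e$ be positive integers with $m=2n$ and $e=\gcd(n,d)=\gcd(m,d)$, and let $s\ge0$ and $u\ge1$ be integers. If $H$ is an $\mathbb{F}_{2^e}$-subspace of $\mathbb{F}_{2^e}^u$ of dimension $i$, then \[|W_{s,u,H}|=2^{mi}\,|V_{s,u-i}|.\]
   Context: For integers $s\ge0$ and $u\ge1$, $V_{s,u}$ denotes the set of solutions $(x_1,\dots,x_{2u})\in\mathbb{F}_{2^m}^{2u}$ of the system \[\sum_{i=1}^u\big(x_{2i-1}x_{2i}^{2^{(\frac{n}{e}-j)d}}+x_{2i-1}^{2^{(\frac{n}{e}-j)d}}x_{2i}\big)=0,\qquad j=0,1,\dots,s.\] By convention $|V_{s,0}|=1$. For $\vec x=(x_1,\dots,x_{2u})\in V_{s,u}$ let $Z(\vec x)=\{(c_1,\dots,c_u)\in\mathbb{F}_{2^e}^u\mid \sum_{i=1}^u c_ix_{2i}=0\}$. For a subspace $H\subseteq\mathbb{F}_{2^e}^u$ let $W_{s,u,H}=\{\vec x\in V_{s,u}\mid Z(\vec x)\supseteq H\}$. *)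

From HB Require Import structures.
From mathcomp Require Import all_boot all_order all_algebra all_field.
Set Implicit Arguments. Unset Strict Implicit. Unset Printing Implicit Defensive.
Import Order.TTheory GRing.Theory Num.Theory.
Local Open Scope ring_scope.

(* F plays the role of F_{2^m}.  The Frobenius power x^(2^t) for an integer
   t (possibly negative) is x^(2^(t mod m)), since x^(2^m) = x on F_{2^m}. *)
Definition frobz (F : finFieldType) (m : nat) (t : int) (x : F) : F :=
  x ^+ (2 ^ `|(t %% m%:Z)%Z|%N)%N.

(* A point (x_1,...,x_{2u}) of F^{2u} is encoded as x : {ffun 'I_u -> F * F}
   with x i = (x_{2i-1}, x_{2i})  (0-based i). *)
Definition Vset (F : finFieldType) (m n d e s u : nat) : {set {ffun 'I_u -> F * F}} :=
  [set x : {ffun 'I_u -> F * F} |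
    [forall j : 'I_s.+1,
      \sum_(i < u)
        ((x i).1 * frobz m (((n %/ e)%:Z - (nat_of_ord j)%:Z) * d%:Z) (x i).2
         + frobz m (((n %/ e)%:Z - (nat_of_ord j)%:Z) * d%:Z) (x i).1 * (x i).2)
      == 0]].

(* K plays the role of F_{2^e}, embedded in F by iota. *)
Definition Zset (K F : finFieldType) (iota : {rmorphism K -> F}) (u : nat)
  (x : {ffun 'I_u -> F * F}) : {set 'rV[K]_u} :=
  [set c : 'rV[K]_u | \sum_(i < u) iota (c 0 i) * (x i).2 == 0].

Definition Wset (K F : finFieldType) (iota : {rmorphism K -> F})
  (m n d e s u : nat) (H : {vspace 'rV[K]_u}) : {set {ffun 'I_u -> F * F}} :=
  [set x in Vset F m n d e s u |
    [forall c : 'rV[K]_u, (c \in H) ==> (c \in Zset iota x)]].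
Arguments Vset F m n d e s u : clear implicits.
Arguments Wset K F iota m n d e s u H : clear implicits.
Arguments Zset K F iota u x : clear implicits.

(* Pick a basis of F_{2^e}^u whose first i vectors span H, with change-of-basis matrices
   M, P = M^-1 over F_{2^e}, and substitute x_odd := x_odd M, x_even := P x_even.  Each
   equation is a sum of terms a b^q + a^q b with q = 2^t and t = (n/e - j) d mod m a multiple
   of e, since e divides d and m; the entries of M and P are fixed by x |-> x^q and this power is additive,
   so the substitution preserves every equation.  It carries the points with x_{2k} = 0 for
   k < i bijectively onto W_{s,u,H}; for those points the first i pairs drop out of the
   equations, so their odd coordinates are free and the remaining pairs form a point of
   V_{s,u-i}. *)

From HB Require Import structures.
From mathcomp Require Import all_boot all_order all_algebra all_field.
Import GRing.Theory.
Local Open Scope ring_scope.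
Set Implicit Arguments. Unset Strict Implicit.

Lemma sumr_exprn_pchar (R : comNzRingType) q (I : finType) (f : I -> R) :
  [pchar R].-nat q -> (\sum_i f i) ^+ q = \sum_i f i ^+ q.
Proof.
move=> charq; apply: (big_morph (fun x : R => x ^+ q)); first by move=> x y; exact: exprDn_pchar.
by case/andP: charq => q_gt0 _; rewrite expr0n eqn0Ngt q_gt0.
Qed.

Lemma expf_card_expn (K : finFieldType) r (k : K) : k ^+ (#|K| ^ r) = k.
Proof. by elim: r => [|r IH]; rewrite ?expn0 ?expr1 // expnSr exprM IH expf_card. Qed.

Lemma dvdn_absz_modz (e m : nat) (z : int) :
  (e %| m)%N -> (e%:Z %| z)%Z -> (e %| `|(z %% m%:Z)%Z|)%N.
Proof.
move=> em ez; rewrite -[e]/(`|e%:Z|)%N -dvdzE.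
have -> : (z %% m%:Z)%Z = z - (z %/ m%:Z)%Z * m%:Z.
  by rewrite {2}(divz_eq z m%:Z) addrC addKr.
by rewrite rpredB // dvdz_mull // dvdzE.
Qed.

Section PairMatrixAction.
Variables (R : comNzRingType) (u : nat).
Implicit Types (A C : 'M[R]_u) (x : {ffun 'I_u -> R * R}).

Definition mxpair_act A C x : {ffun 'I_u -> R * R} :=
  [ffun k => (\sum_r (x r).1 * A r k, \sum_r C k r * (x r).2)].

Lemma mxpair_actM A1 C1 A2 C2 x :
  mxpair_act A2 C2 (mxpair_act A1 C1 x) = mxpair_act (A1 *m A2) (C2 *m C1) x.
Proof.
apply/ffunP=> k; rewrite !ffunE /=; congr (_, _).
  under eq_bigr do rewrite ffunE /= mulr_suml.
  rewrite exchange_big; apply: eq_bigr => s _; rewrite mxE mulr_sumr.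
  by apply: eq_bigr => r _; rewrite mulrA.
under eq_bigr do rewrite ffunE /= mulr_sumr.
rewrite exchange_big; apply: eq_bigr => s _; rewrite mxE mulr_suml.
by apply: eq_bigr => r _; rewrite mulrA.
Qed.

Lemma mxpair_act1 x : mxpair_act 1%:M 1%:M x = x.
Proof.
apply/ffunP=> k; rewrite !ffunE /=.
rewrite (bigD1 k) //= big1 ?addr0; last by move=> r /negPf nrk; rewrite mxE nrk mulr0.
rewrite (bigD1 k) //= big1 ?addr0; last by move=> r; rewrite eq_sym => /negPf nkr; rewrite mxE nkr mul0r.
by rewrite !mxE eqxx mulr1 mul1r; case: (x k).
Qed.

Lemma mxpair_act_can A C : A *m C = 1%:M -> cancel (mxpair_act A C) (mxpair_act C A).
Proof. by move=> AC1 x; rewrite mxpair_actM AC1 mxpair_act1. Qed.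

Lemma sum_mul_mxpair A C (f g : 'I_u -> R) :
  A *m C = 1%:M ->
  \sum_k (\sum_r f r * A r k) * (\sum_s C k s * g s) = \sum_r f r * g r.
Proof.
move=> AC1.
transitivity (\sum_r \sum_s f r * g s * (A *m C) r s).
  under eq_bigr do rewrite mulr_suml.
  rewrite exchange_big; apply: eq_bigr => r _.
  under eq_bigr do rewrite mulr_sumr.
  rewrite exchange_big; apply: eq_bigr => s _.
  rewrite mxE mulr_sumr; apply: eq_bigr => k _.
  by rewrite [RHS]mulrACA [g s * _]mulrC.
apply: eq_bigr => r _; rewrite AC1.
rewrite (bigD1 r) //= big1 ?addr0; last by move=> s; rewrite eq_sym => /negPf nrs; rewrite mxE nrs mulr0.
by rewrite mxE eqxx mulr1.
Qed.

Definition frob_form (q : nat) (p : R * R) := p.1 * p.2 ^+ q + p.1 ^+ q * p.2.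

Lemma sum_frob_form_mxpair_act q A C x :
  [pchar R].-nat q -> A *m C = 1%:M ->
  (forall i j, A i j ^+ q = A i j) -> (forall i j, C i j ^+ q = C i j) ->
  \sum_i frob_form q (mxpair_act A C x i) = \sum_i frob_form q (x i).
Proof.
move=> charq AC1 fixA fixC; rewrite /frob_form !big_split /=; congr (_ + _).
  rewrite -(sum_mul_mxpair (fun r => (x r).1) (fun r => (x r).2 ^+ q) AC1).
  apply: eq_bigr => k _; rewrite ffunE /= sumr_exprn_pchar //; congr (_ * _).
  by apply: eq_bigr => r _; rewrite exprMn fixC.
rewrite -(sum_mul_mxpair (fun r => (x r).1 ^+ q) (fun r => (x r).2) AC1).
apply: eq_bigr => k _; rewrite ffunE /= sumr_exprn_pchar //; congr (_ * _).
by apply: eq_bigr => r _; rewrite exprMn fixA.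
Qed.

End PairMatrixAction.

Lemma Vset_mxpair_act (m n d e s u : nat) (K F : finFieldType) (iota : {rmorphism K -> F})
    (M P : 'M[K]_u) (x : {ffun 'I_u -> F * F}) :
  (e %| m)%N -> (e %| d)%N -> #|K| = (2 ^ e)%N -> (2 \in [pchar F])%N -> M *m P = 1%:M ->
  x \in Vset F m n d e s u -> mxpair_act (map_mx iota M) (map_mx iota P) x \in Vset F m n d e s u.
Proof.
move=> em ed cardK charF MP; rewrite !inE => /forallP Vx; apply/forallP => j.
move: (Vx j); set z := (_ * d%:Z)%R; set t := `|(z %% m%:Z)%Z|%N.
have fixK (k : K) : iota k ^+ (2 ^ t)%N = iota k.
  have /dvdnP [r ->] : (e %| t)%N by rewrite dvdn_absz_modz // dvdz_mull // dvdzE.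
  by rewrite -rmorphXn mulnC expnM -cardK expf_card_expn.
have charq : [pchar F].-nat (2 ^ t)%N by rewrite pnatX (pnatE _ (isT : prime 2)) charF.
have iotaMP : map_mx iota M *m map_mx iota P = 1%:M by rewrite -map_mxM MP map_mx1.
have frob_formE (y : {ffun 'I_u -> F * F}) :
  \sum_i ((y i).1 * frobz m z (y i).2 + frobz m z (y i).1 * (y i).2)
  = \sum_i frob_form (2 ^ t)%N (y i) by [].
by rewrite !frob_formE sum_frob_form_mxpair_act // => i k; rewrite mxE fixK.
Qed.

Lemma vspace_completed_basis (K : fieldType) (vT : vectType K) (H : {vspace vT}) k :
  \dim {:vT} = k ->
  exists B : k.-tuple vT, basis_of fullv B /\ forall l, (l < \dim H)%N -> B`_l = (vbasis H)`_l.
Proof.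
move=> dimk; set S := vbasis H ++ vbasis H^C.
have sizeS : size S = k by rewrite size_cat !size_tuple dimv_compl -dimk subnKC ?dimvS ?subvf.
exists [tuple S`_l | l < k]; split; last first.
  move=> l lH; have lk : (l < k)%N by rewrite -dimk (leq_trans lH) ?dimvS ?subvf.
  by rewrite -[l]/(val (Ordinal lk)) -tnth_nth tnth_mktuple nth_cat size_tuple lH.
have -> : [tuple S`_l | l < k] = S :> seq vT.
  apply: (@eq_from_nth _ 0); first by rewrite size_tuple sizeS.
  move=> l; rewrite size_tuple => lk.
  by rewrite -[l]/(val (Ordinal lk)) -tnth_nth tnth_mktuple.
rewrite /basis_of cat_free span_cat !(basis_free (vbasisP _)) !(span_basis (vbasisP _)).
have -> : directv (H + H^C) by apply/directv_addP; rewrite capv_compl.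
by rewrite addv_complf eqxx.
Qed.

Lemma vspace_adapted_mx (K : fieldType) u (H : {vspace 'rV[K]_u}) :
  exists M P : 'M[K]_u, [/\ M *m P = 1%:M,
     forall k : 'I_u, (k < \dim H)%N -> row k M \in H &
     forall c, c \in H -> forall k : 'I_u, (\dim H <= k)%N -> (c *m P) 0 k = 0].
Proof.
have [|B [basisB B_H]] := vspace_completed_basis H (k := u); first by rewrite dimvf /dim /= mul1n.
have [spanB freeB] := andP basisB.
pose M : 'M[K]_u := \matrix_(k, j) B`_k 0 j.
pose P : 'M[K]_u := \matrix_(r, k) coord B k (delta_mx 0 r).
have rowM k : row k M = B`_k by apply/rowP => j; rewrite !mxE.
have mulP c : c *m P = \row_k coord B k c.
  apply/rowP => k; rewrite !mxE {2}(row_sum_delta c) linear_sum.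
  by apply: eq_bigr => r _; rewrite linearZ /= mxE.
exists M, P; split.
- apply: mulmx1C; apply/row_matrixP => r; rewrite row_mul rowE mulP mulmx_sum_row.
  rewrite [RHS]rowE mulmx1; under eq_bigr do rewrite rowM mxE.
  by rewrite -coord_span // (eqP spanB) memvf.
- move=> k kH; rewrite rowM B_H //.
  by apply: vbasis_mem; apply: mem_nth; rewrite size_tuple.
- move=> c cH k kH; rewrite mulP mxE (coord_vbasis cH) linear_sum big1 // => l _.
  have lu : (l < u)%N := leq_trans (ltn_ord l) (leq_trans kH (ltnW (ltn_ord k))).
  have -> : (vbasis H)`_l = B`_(Ordinal lu) by rewrite B_H //= ltn_ord.
  have coordB := coord_free (Ordinal lu) k freeB; rewrite /= in coordB.
  rewrite linearZ /= coordB.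
  case: eqP => [lk|]; last by rewrite mulr0.
  by move: kH; rewrite -lk /= leqNgt ltn_ord.
Qed.

Definition Vset_head0 (F : finFieldType) (m n d e s u i : nat) : {set {ffun 'I_u -> F * F}} :=
  [set x in Vset F m n d e s u | [forall k : 'I_u, (k < i)%N ==> ((x k).2 == 0)]].

Definition pad_head (F : finFieldType) i u (p : {ffun 'I_i -> F} * {ffun 'I_u -> F * F}) :
  {ffun 'I_(i + u) -> F * F} :=
  [ffun k => match split k with inl k1 => (p.1 k1, 0) | inr k2 => p.2 k2 end].

Lemma sum_frobz_rshift (F : finFieldType) m z i u (x : {ffun 'I_(i + u) -> F * F}) :
  (forall k : 'I_i, (x (lshift u k)).2 = 0) ->
  \sum_(k < i + u) ((x k).1 * frobz m z (x k).2 + frobz m z (x k).1 * (x k).2)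
  = \sum_(k < u) ((x (rshift i k)).1 * frobz m z (x (rshift i k)).2
                  + frobz m z (x (rshift i k)).1 * (x (rshift i k)).2).
Proof.
move=> x0; rewrite big_split_ord /= big1 ?add0r // => k _.
by rewrite x0 /frobz expr0n expn_eq0 !mulr0 addr0.
Qed.

Lemma Vset_head0_pad_head (F : finFieldType) m n d e s i u :
  Vset_head0 F m n d e s (i + u) i = @pad_head F i u @: setX setT (Vset F m n d e s u).
Proof.
have splitl (k : 'I_i) : split (lshift u k) = inl k := unsplitK (inl k).
have splitr (k : 'I_u) : split (rshift i k) = inr k := unsplitK (inr k).
apply/setP => x; apply/idP/imsetP.
- rewrite inE => /andP [Vx /forallP x0].
  have x0l (k : 'I_i) : (x (lshift u k)).2 = 0.
    by move: (x0 (lshift u k)) => /implyP /(_ (ltn_ord k)) /eqP.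
  exists ([ffun k => (x (lshift u k)).1], [ffun k => x (rshift i k)]).
    rewrite !inE /=; move: Vx; rewrite inE => /forallP Vx; apply/forallP => j.
    by move: (Vx j); rewrite sum_frobz_rshift //; under eq_bigr do rewrite ffunE.
  apply/ffunP => k; rewrite ffunE; case: split_ordP => j ->; rewrite ?splitl ?splitr !ffunE //=.
  by rewrite -(x0l j); case: (x _).
- case=> [[a y]]; rewrite !inE /= => Vy ->.
  have pad0 (k : 'I_i) : (pad_head (a, y) (lshift u k)).2 = 0 by rewrite ffunE splitl.
  apply/andP; split.
    move/forallP: Vy => Vy; apply/forallP => j.
    by rewrite sum_frobz_rshift //; under eq_bigr do rewrite ffunE splitr; exact: Vy.
  by apply/forallP => k; apply/implyP; rewrite ffunE; case: split_ordP.
Qed.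

Lemma card_Vset_head0 (F : finFieldType) m n d e s i u : (i <= u)%N ->
  #|Vset_head0 F m n d e s u i| = (#|F| ^ i * #|Vset F m n d e s (u - i)|)%N.
Proof.
move=> /subnKC; move: (u - i)%N => u' <-.
have splitl (k : 'I_i) : split (lshift u' k) = inl k := unsplitK (inl k).
have splitr (k : 'I_u') : split (rshift i k) = inr k := unsplitK (inr k).
rewrite Vset_head0_pad_head card_in_imset ?cardsX ?cardsT ?card_ffun ?card_ord //.
move=> [a y] [a' y'] _ _ /ffunP eq_pad; congr (_, _); apply/ffunP => k.
  by move: (eq_pad (lshift u' k)); rewrite !ffunE splitl => -[].
by move: (eq_pad (rshift i k)); rewrite !ffunE splitr.
Qed.

Section WsetChangeOfBasis.
Variables (m n d e s u : nat) (K F : finFieldType) (iota : {rmorphism K -> F}).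
Variables (H : {vspace 'rV[K]_u}) (M P : 'M[K]_u).
Hypotheses (em : (e %| m)%N) (ed : (e %| d)%N).
Hypotheses (cardK : #|K| = (2 ^ e)%N) (charF : (2 \in [pchar F])%N).
Hypotheses (MP : M *m P = 1%:M) (rowM_H : forall k : 'I_u, (k < \dim H)%N -> row k M \in H).
Hypothesis mulP_H : forall c, c \in H -> forall k : 'I_u, (\dim H <= k)%N -> (c *m P) 0 k = 0.

Local Notation act := (mxpair_act (map_mx iota M) (map_mx iota P)).
Local Notation act_inv := (mxpair_act (map_mx iota P) (map_mx iota M)).

Lemma Zset_mxpair_act c x :
  (c \in Zset K F iota u (act x)) = (\sum_r iota ((c *m P) 0 r) * (x r).2 == 0).
Proof.
rewrite inE; congr (_ == 0); under eq_bigr do rewrite ffunE /= mulr_sumr.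
rewrite exchange_big; apply: eq_bigr => r _; rewrite mxE rmorph_sum mulr_suml.
by apply: eq_bigr => k _; rewrite rmorphM /= mxE mulrA.
Qed.

Lemma Wset_mxpair_act : Wset K F iota m n d e s u H = act @: Vset_head0 F m n d e s u (\dim H).
Proof.
have PM : P *m M = 1%:M := mulmx1C MP.
have iotaMP : map_mx iota M *m map_mx iota P = 1%:M by rewrite -map_mxM MP map_mx1.
apply/setP => y; apply/idP/imsetP.
- rewrite inE => /andP [Vy /forallP yZ].
  exists (act_inv y); last by rewrite (mxpair_act_can _) // -map_mxM PM map_mx1.
  rewrite inE Vset_mxpair_act //=; apply/forallP => k; apply/implyP => kH.
  move: (yZ (row k M)); rewrite rowM_H // inE => /eqP <-; rewrite ffunE /=.
  by apply/eqP; apply: eq_bigr => r _; rewrite !mxE.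
- case=> x; rewrite inE => /andP [Vx /forallP x0] ->.
  rewrite inE Vset_mxpair_act //=; apply/forallP => c; apply/implyP => cH.
  rewrite Zset_mxpair_act big1 // => r _.
  case: (ltnP r (\dim H)) => [rH|Hr]; last by rewrite mulP_H // rmorph0 mul0r.
  by move: (x0 r); rewrite rH => /eqP ->; rewrite mulr0.
Qed.

Lemma card_Wset : #|Wset K F iota m n d e s u H| = #|Vset_head0 F m n d e s u (\dim H)|.
Proof.
have iotaMP : map_mx iota M *m map_mx iota P = 1%:M by rewrite -map_mxM MP map_mx1.
by rewrite Wset_mxpair_act card_imset //; exact: can_inj (mxpair_act_can iotaMP).
Qed.

End WsetChangeOfBasis.

Theorem lemma6p1 (m n d e : nat) (K F : finFieldType) (iota : {rmorphism K -> F})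
  (s u i : nat) (H : {vspace 'rV[K]_u}) :
  (0 < m)%N -> (0 < n)%N -> (0 < d)%N -> (0 < e)%N ->
  m = (2 * n)%N -> e = gcdn n d -> e = gcdn m d ->
  #|F| = (2 ^ m)%N -> #|K| = (2 ^ e)%N ->
  \dim H = i ->
  #|Wset K F iota m n d e s u H| = (2 ^ (m * i) * #|Vset F m n d e s (u - i)|)%N.
Proof.
move=> _ _ _ _ _ _ e_gcd cardF cardK <-.
have charF : (2 \in [pchar F])%N by exact: card_finPcharP cardF _.
have em : (e %| m)%N by rewrite e_gcd dvdn_gcdl.
have ed : (e %| d)%N by rewrite e_gcd dvdn_gcdr.
have [M [P [MP rowM_H mulP_H]]] := vspace_adapted_mx H.
have dimH_le : (\dim H <= u)%N.
  by rewrite (leq_trans (dimvS (subvf H))) // dimvf /dim /= mul1n.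
rewrite (card_Wset n s iota em ed cardK charF MP rowM_H mulP_H).
by rewrite card_Vset_head0 // cardF expnM.
Qed.
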